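(* The monoidal category $\mathcal{TL}_0(\Bbbk)$ is not rigid.
   Context: $\Bbbk$ is a field. $\mathcal{TL}_0(\Bbbk)$ is the strict $\Bbbk$-linear monoidal category with objects $\mathbf 0,\mathbf 1,\dots$, $\mathbf m\otimes\mathbf n=\mathbf{m+n}$, unit $\mathbf 0$, whose morphisms are generated under composition, tensor product and linear combination by $\mathrm{cup}:\mathbf 0\to\mathbf 2$ and $\mathrm{cap}:\mathbf 2\to\mathbf 0$ subject to $(\mathrm{id}_{\mathbf 1}\otimes\mathrm{cap})\circ(\mathrm{cup}\otimes\mathrm{id}_{\mathbf 1})=0$, $(\mathrm{cap}\otimes\mathrm{id}_{\mathbf 1})\circ(\mathrm{id}_{\mathbf 1}\otimes\mathrm{cup})=0$ and $\mathrm{cap}\circ\mathrm{cup}=\mathrm{id}_{\mathbf 0}$. A monoidal category is rigid if every object has both a left and a right dual. *)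

(* The category TL_0(k) is presented by generators and
   relations: morphisms are (raw, typed) terms built from identities, cup, cap,
   composition, tensor product and linear combinations, modulo the smallest
   congruence containing the axioms of a strict k-linear monoidal category
   and the three defining relations. *)
From mathcomp Require Import all_boot all_algebra.
Set Implicit Arguments. Unset Strict Implicit. Unset Printing Implicit Defensive.
Import GRing.Theory.

Section TL0.
Variable k : fieldType.

(* Raw morphism terms; objects are natural numbers, m (x) n = m + n. *)
Inductive tm : Type :=
| tid   : nat -> tm
| tcup  : tm
| tcap  : tm
| tcomp : tm -> tm -> tm            (* tcomp f g = f o g *)
| ttens : tm -> tm -> tm
| tzero : nat -> nat -> tm
| tadd  : tm -> tm -> tm
| tscale : k -> tm -> tm.

Fixpoint src (f : tm) : nat :=
  match f with
  | tid n => n | tcup => 0 | tcap => 2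
  | tcomp _ g => src g
  | ttens f g => (src f + src g)%N
  | tzero m _ => m
  | tadd f _ => src f
  | tscale _ f => src f
  end.

Fixpoint tgt (f : tm) : nat :=
  match f with
  | tid n => n | tcup => 2 | tcap => 0
  | tcomp f _ => tgt f
  | ttens f g => (tgt f + tgt g)%N
  | tzero _ n => n
  | tadd f _ => tgt f
  | tscale _ f => tgt f
  end.

Fixpoint wt (f : tm) : Prop :=
  match f with
  | tid _ | tcup | tcap | tzero _ _ => True
  | tcomp f g => [/\ wt f, wt g & src f = tgt g]
  | ttens f g => wt f /\ wt g
  | tadd f g => [/\ wt f, wt g, src f = src g & tgt f = tgt g]
  | tscale _ f => wt f
  end.

Definition hom (m n : nat) (f : tm) : Prop := [/\ wt f, src f = m & tgt f = n].

Inductive eqv : tm -> tm -> Prop :=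
| eqv_refl f : eqv f f
| eqv_sym f g : eqv f g -> eqv g f
| eqv_trans f g h : eqv f g -> eqv g h -> eqv f h
| eqv_comp f f' g g' : eqv f f' -> eqv g g' -> eqv (tcomp f g) (tcomp f' g')
| eqv_tens f f' g g' : eqv f f' -> eqv g g' -> eqv (ttens f g) (ttens f' g')
| eqv_add f f' g g' : eqv f f' -> eqv g g' -> eqv (tadd f g) (tadd f' g')
| eqv_scale a f f' : eqv f f' -> eqv (tscale a f) (tscale a f')
| eqv_compA m n p q f g h : hom p q f -> hom n p g -> hom m n h ->
    eqv (tcomp f (tcomp g h)) (tcomp (tcomp f g) h)
| eqv_id_l m n f : hom m n f -> eqv (tcomp (tid n) f) f
| eqv_id_r m n f : hom m n f -> eqv (tcomp f (tid m)) f
| eqv_tensA f g h : wt f -> wt g -> wt h ->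
    eqv (ttens f (ttens g h)) (ttens (ttens f g) h)
| eqv_tens_unit_l f : wt f -> eqv (ttens (tid 0) f) f
| eqv_tens_unit_r f : wt f -> eqv (ttens f (tid 0)) f
| eqv_tens_id m n : eqv (ttens (tid m) (tid n)) (tid (m + n))
| eqv_interchange m n p m' n' p' f f' g g' :
    hom n p f -> hom m n g -> hom n' p' f' -> hom m' n' g' ->
    eqv (tcomp (ttens f f') (ttens g g')) (ttens (tcomp f g) (tcomp f' g'))
| eqv_addA m n f g h : hom m n f -> hom m n g -> hom m n h ->
    eqv (tadd f (tadd g h)) (tadd (tadd f g) h)
| eqv_addC m n f g : hom m n f -> hom m n g -> eqv (tadd f g) (tadd g f)
| eqv_add0 m n f : hom m n f -> eqv (tadd (tzero m n) f) f
| eqv_addN m n f : hom m n f -> eqv (tadd f (tscale (-1)%R f)) (tzero m n)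
| eqv_scale1 f : wt f -> eqv (tscale 1%R f) f
| eqv_scaleA a b f : wt f -> eqv (tscale a (tscale b f)) (tscale (a * b)%R f)
| eqv_scaleDl a b f : wt f -> eqv (tscale (a + b)%R f) (tadd (tscale a f) (tscale b f))
| eqv_scaleDr m n a f g : hom m n f -> hom m n g ->
    eqv (tscale a (tadd f g)) (tadd (tscale a f) (tscale a g))
| eqv_compDl m n p f g h : hom n p f -> hom n p g -> hom m n h ->
    eqv (tcomp (tadd f g) h) (tadd (tcomp f h) (tcomp g h))
| eqv_compDr m n p f g h : hom n p f -> hom m n g -> hom m n h ->
    eqv (tcomp f (tadd g h)) (tadd (tcomp f g) (tcomp f h))
| eqv_compZl m n p a f g : hom n p f -> hom m n g ->
    eqv (tcomp (tscale a f) g) (tscale a (tcomp f g))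
| eqv_compZr m n p a f g : hom n p f -> hom m n g ->
    eqv (tcomp f (tscale a g)) (tscale a (tcomp f g))
| eqv_tensDl m n f g h : hom m n f -> hom m n g -> wt h ->
    eqv (ttens (tadd f g) h) (tadd (ttens f h) (ttens g h))
| eqv_tensDr m n f g h : wt f -> hom m n g -> hom m n h ->
    eqv (ttens f (tadd g h)) (tadd (ttens f g) (ttens f h))
| eqv_tensZl a f g : wt f -> wt g ->
    eqv (ttens (tscale a f) g) (tscale a (ttens f g))
| eqv_tensZr a f g : wt f -> wt g ->
    eqv (ttens f (tscale a g)) (tscale a (ttens f g))
| eqv_zigzag1 :
    eqv (tcomp (ttens (tid 1) tcap) (ttens tcup (tid 1))) (tzero 1 1)
| eqv_zigzag2 :
    eqv (tcomp (ttens tcap (tid 1)) (ttens (tid 1) tcup)) (tzero 1 1)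
| eqv_loop : eqv (tcomp tcap tcup) (tid 0).

Definition has_left_dual (m : nat) : Prop :=
  exists d ev coev,
    [/\ hom (d + m) 0 ev, hom 0 (m + d) coev,
        eqv (tcomp (ttens (tid m) ev) (ttens coev (tid m))) (tid m)
      & eqv (tcomp (ttens ev (tid d)) (ttens (tid d) coev)) (tid d)].

Definition has_right_dual (m : nat) : Prop :=
  exists d ev coev,
    [/\ hom (m + d) 0 ev, hom 0 (d + m) coev,
        eqv (tcomp (ttens ev (tid m)) (ttens (tid m) coev)) (tid m)
      & eqv (tcomp (ttens (tid d) ev) (ttens coev (tid d))) (tid d)].

Definition TL0_rigid : Prop := forall m : nat, has_left_dual m /\ has_right_dual m.

End TL0.

From mathcomp Require Import all_boot all_algebra.
Set Implicit Arguments. Unset Strict Implicit. Unset Printing Implicit Defensive.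
Import GRing.Theory.
Local Open Scope ring_scope.

(* TL_0(k) acts on the tensor powers of V = k e0 + k e1 + k e2: the object n
   goes to V^(x)n, whose basis is the words of length n ([den f s t] is the
   entry of f at input word s and output word t), cup goes to e0 (x) e1 and cap
   to the dual functional; the zigzags vanish because e0 <> e1, and
   cap o cup = 1.  Neither cup nor cap involves e2, so every morphism preserves
   the number of letters e2 of a word.  If 1 had a left dual d, the snake
   (1 (x) ev) o (coev (x) 1) would be the identity of V, yet it kills e2: the
   letter e2 entering on the right strand is fed into ev, whose target 0 has
   no letters at all. *)

Arguments tid {k}.
Arguments tcup {k}.
Arguments tcap {k}.
Arguments tzero {k}.

Section Words.
Variable T : finType.

Fixpoint words (n : nat) : seq (seq T) :=
  if n is n'.+1 then [seq x :: u | x <- enum T, u <- words n'] else [:: [::]].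

Lemma mem_words n u : (u \in words n) = (size u == n).
Proof.
elim: n u => [|n IHn] [|x u] //=.
- by apply/allpairsP => -[[y v] []].
- apply/allpairsP/idP => [[[y v] /= [_ + [_ ->]]]|]; first by rewrite IHn.
  by rewrite eqSS -IHn => uw; exists (x, u); rewrite mem_enum.
Qed.

Lemma words_uniq n : uniq (words n).
Proof.
elim: n => [|n IHn] //=; apply: allpairs_uniq => [||[x u] [y v] _ _ [-> ->]] //.
exact: enum_uniq.
Qed.

Section Sums.
Variable R : nmodType.
Implicit Type F : seq T -> R.

Lemma sum_words_cons n F :
  \sum_(u <- words n.+1) F u = \sum_(x <- enum T) \sum_(u <- words n) F (x :: u).
Proof. exact: big_allpairs_dep. Qed.

Lemma sum_words_cat a b F :
  \sum_(u <- words (a + b)) F u = \sum_(u <- words a) \sum_(v <- words b) F (u ++ v).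
Proof.
elim: a F => [|a IHa] F; first by rewrite big_seq1.
by rewrite addSn !sum_words_cons; apply: eq_bigr => x _; rewrite IHa.
Qed.
End Sums.

Lemma sum_words_delta (R : pzSemiRingType) n t (F : seq T -> R) :
  \sum_(u <- words n) (u == t)%:R * F u = (size t == n)%:R * F t.
Proof.
rewrite -mem_words; have [tw | tNw] := boolP (t \in words n).
  rewrite (bigD1_seq t) ?words_uniq //= eqxx mul1r big1 ?addr0 // => u /negbTE->.
  by rewrite mul0r.
rewrite mul0r big1_seq // => u /andP[_ uw].
have /negbTE-> : u != t by apply: contraNneq tNw => <-.
by rewrite mul0r.
Qed.
End Words.

Section Model.
Variable k : fieldType.

Let e0 : 'I_3 := @Ordinal 3 0 isT.
Let e1 : 'I_3 := @Ordinal 3 1 isT.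
Let e2 : 'I_3 := @Ordinal 3 2 isT.

Fixpoint den (f : tm k) (s t : seq 'I_3) : k :=
  match f with
  | tid n => ((size s == n) && (s == t))%:R
  | tcup => ((s == [::]) && (t == [:: e0; e1]))%:R
  | tcap => ((s == [:: e0; e1]) && (t == [::]))%:R
  | tcomp f g => \sum_(u <- words _ (src f)) den f u t * den g s u
  | ttens f g => den f (take (src f) s) (take (tgt f) t) *
                 den g (drop (src f) s) (drop (tgt f) t)
  | tzero _ _ => 0
  | tadd f g => den f s t + den g s t
  | tscale a f => a * den f s t
  end.

Lemma den_eq0_src f s t : wt f -> size s != src f -> den f s t = 0.
Proof.
elim: f s t => /= [n s t _ /negbTE-> //|[] //|s t _|f IHf g IHg s t [_ wg _] sN
  |f IHf g IHg s t [wf wg] sN|//|f IHf g IHg s t [wf wg eqs _] sN|a f IHf s t wf sN].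
- by case: (s =P [:: e0; e1]) => [->|].
- by rewrite big1_seq // => u _; rewrite IHg ?mulr0.
- have [sf|] := eqVneq (size (take (src f) s)) (src f); last by move/IHf->; rewrite ?mul0r.
  rewrite IHg ?mulr0 //; apply: contra sN => /eqP sg.
  by rewrite -(cat_take_drop (src f) s) size_cat sf sg.
- by rewrite IHf // IHg -?eqs ?addr0.
- by rewrite IHf ?mulr0.
Qed.

Lemma den_eq0_tgt f s t : wt f -> size t != tgt f -> den f s t = 0.
Proof.
elim: f s t => /= [n s t _|s t _|s t _|f IHf g IHg s t [wf _ _] tN
  |f IHf g IHg s t [wf wg] tN|//|f IHf g IHg s t [wf wg _ eqt] tN|a f IHf s t wf tN].
- by case: (s =P t) => [->|]; rewrite ?andbF // => /negbTE->.
- by case: (t =P [:: e0; e1]) => [->|]; rewrite ?andbF.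
- by case: (t =P [::]) => [->|]; rewrite ?andbF.
- by rewrite big1_seq // => u _; rewrite IHf ?mul0r.
- have [tf|] := eqVneq (size (take (tgt f) t)) (tgt f); last by move/IHf->; rewrite ?mul0r.
  rewrite IHg ?mulr0 //; apply: contra tN => /eqP tg.
  by rewrite -(cat_take_drop (tgt f) t) size_cat tf tg.
- by rewrite IHf // IHg -?eqt ?addr0.
- by rewrite IHf ?mulr0.
Qed.

Lemma den_eq0_count f s t : count_mem e2 s != count_mem e2 t -> den f s t = 0.
Proof.
elim: f s t => /= [n s t|s t|s t|f IHf g IHg s t|f IHf g IHg s t|//|f IHf g IHg s t|a f IHf s t] st.
- by case: (s =P t) st => [->|]; rewrite ?eqxx ?andbF.
- by case: (s =P [::]) st => [->|]; case: (t =P [:: e0; e1]) => [->|]; rewrite ?andbF.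
- by case: (s =P [:: e0; e1]) st => [->|]; case: (t =P [::]) => [->|]; rewrite ?andbF.
- rewrite big1_seq // => u _.
  have [su|] := eqVneq (count_mem e2 s) (count_mem e2 u); last by move/IHg->; rewrite mulr0.
  by rewrite IHf ?mul0r // -su.
- have [eq_take|] := eqVneq (count_mem e2 (take (src f) s)) (count_mem e2 (take (tgt f) t));
    last by move/IHf->; rewrite mul0r.
  rewrite IHg ?mulr0 //; apply: contra st => /eqP eq_drop.
  by rewrite -(cat_take_drop (src f) s) -(cat_take_drop (tgt f) t) !count_cat eq_take eq_drop.
- by rewrite IHf // IHg // addr0.
- by rewrite IHf // mulr0.
Qed.

Lemma den_compA f g h : den (tcomp f (tcomp g h)) =2 den (tcomp (tcomp f g) h).
Proof.
move=> s t /=; under eq_bigr do rewrite mulr_sumr.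
rewrite exchange_big; apply: eq_bigr => v _; rewrite mulr_suml.
by apply: eq_bigr => u _; rewrite mulrA.
Qed.

Lemma den_comp_id_l n f : wt f -> tgt f = n -> den (tcomp (tid n) f) =2 den f.
Proof.
move=> wf <- s t /=; rewrite -[RHS]mul1r.
under eq_big_seq => u do rewrite mem_words => /eqP->; rewrite eqxx /=.
rewrite sum_words_delta; have [//|tN] := eqVneq (size t) (tgt f).
by rewrite den_eq0_tgt ?mulr0.
Qed.

Lemma den_comp_id_r m f : wt f -> src f = m -> den (tcomp f (tid m)) =2 den f.
Proof.
move=> wf <- s t /=; have [ss|sN] := eqVneq (size s) (src f); last first.
  by rewrite den_eq0_src // big1 // => u _; rewrite mulr0.
under eq_bigr do rewrite /= eq_sym mulrC.
by rewrite sum_words_delta ss eqxx mul1r.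
Qed.

Lemma den_tensA f g h : den (ttens f (ttens g h)) =2 den (ttens (ttens f g) h).
Proof.
move=> s t /=; rewrite mulrA; congr (_ * _ * _).
- by rewrite !take_takel ?leq_addr.
- by rewrite !take_drop (addnC (src g)) (addnC (tgt g)).
- by rewrite !drop_drop (addnC (src g)) (addnC (tgt g)).
Qed.

Lemma den_tens_unit_l f : den (ttens (tid 0) f) =2 den f.
Proof. by move=> s t /=; rewrite !take0 !drop0 mul1r. Qed.

Lemma den_tens_unit_r f : wt f -> den (ttens f (tid 0)) =2 den f.
Proof.
move=> wf s t /=; rewrite size_drop subn_eq0.
have [ltfs|lesf] := ltnP (src f) (size s).
  by rewrite [RHS]den_eq0_src ?gtn_eqF // mulr0.
rewrite take_oversize // drop_oversize //.
have [ltft|letf] := ltnP (tgt f) (size t).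
  rewrite [RHS]den_eq0_tgt ?gtn_eqF // eq_sym -size_eq0 size_drop subn_eq0.
  by rewrite leqNgt ltft mulr0.
by rewrite take_oversize // drop_oversize // mulr1.
Qed.

Lemma den_tens_id m n : den (ttens (tid m) (tid n)) =2 den (tid (m + n)).
Proof.
move=> s t /=; rewrite -natrM mulnb; congr (nat_of_bool _)%:R.
apply/idP/idP => [/and3P[/andP[/eqP sm /eqP eq_take] /eqP sn /eqP eq_drop]|].
  by rewrite -(cat_take_drop m s) -(cat_take_drop m t) size_cat sm sn eq_take eq_drop !eqxx.
case/andP=> /eqP smn /eqP <-.
by rewrite size_takel ?smn ?leq_addr // size_drop smn addKn !eqxx.
Qed.

Lemma den_interchange f f' g g' : src f = tgt g ->
  den (tcomp (ttens f f') (ttens g g')) =2 den (ttens (tcomp f g) (tcomp f' g')).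
Proof.
move=> fg s t /=; rewrite sum_words_cat mulr_suml.
apply: eq_big_seq => u; rewrite mem_words => /eqP su; rewrite mulr_sumr.
apply: eq_bigr => v _; rewrite -fg take_size_cat // drop_size_cat //.
exact: mulrACA.
Qed.

Lemma den_zigzag1 : den (tcomp (ttens (tid 1) tcap) (ttens tcup (tid 1))) =2 den (tzero 1 1).
Proof.
move=> s t; apply: big1_seq => u; rewrite mem_words.
case: u => [|x [|y [|z []]]] //= _; rewrite !eqseq_cons.
by case: (y =P e0) => [->|_] /=; rewrite ?(andbF, mulr0, mul0r).
Qed.

Lemma den_zigzag2 : den (tcomp (ttens tcap (tid 1)) (ttens (tid 1) tcup)) =2 den (tzero 1 1).
Proof.
move=> s t; apply: big1_seq => u; rewrite mem_words.
case: u => [|x [|y [|z []]]] //= _; rewrite !eqseq_cons.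
by case: (y =P e0) => [->|_] /=; rewrite ?(andbF, mulr0, mul0r).
Qed.

Lemma den_loop : den (tcomp tcap tcup) =2 den (tid 0).
Proof.
move=> s t; transitivity
  (\sum_(u <- words _ 2) (u == [:: e0; e1])%:R * ((s == [::]) && (t == [::]))%:R : k).
  apply: eq_bigr => u _; rewrite -natrM mulnb.
  by case: (u == _); rewrite ?mul0r // mul1r andbT andbC.
rewrite (sum_words_delta _ _ (fun=> _)).
by rewrite mul1r; case: s; case: t.
Qed.

Lemma eqv_dims (f g : tm k) : eqv f g -> src f = src g /\ tgt f = tgt g.
Proof.
elim=> {f g} //=.
- by move=> f g _ [-> ->].
- by move=> f g h _ [-> ->] _ [-> ->].
- by move=> f f' g g' _ [_ ->] _ [-> _].
- by move=> f f' g g' _ [-> ->] _ [-> ->].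
- by move=> m n f [_ -> ->].
- by move=> m n f [_ -> ->].
- by move=> f g h _ _ _; rewrite !addnA.
- by move=> f _; rewrite !addn0.
- by move=> m n f g [_ -> ->] [_ -> ->].
- by move=> m n f [_ -> ->].
- by move=> m n f [_ -> ->].
Qed.

Lemma eqv_den (f g : tm k) : eqv f g -> den f =2 den g.
Proof.
elim=> {f g} //.
- by move=> f g _ fg s t; rewrite fg.
- by move=> f g h _ fg _ gh s t; rewrite fg gh.
- move=> f f' g g' /eqv_dims[sf _] ff' _ gg' s t /=.
  by rewrite sf; apply: eq_bigr => u _; rewrite ff' gg'.
- by move=> f f' g g' /eqv_dims[sf tf] ff' _ gg' s t /=; rewrite sf tf ff' gg'.
- by move=> f f' g g' _ ff' _ gg' s t /=; rewrite ff' gg'.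
- by move=> a f f' _ ff' s t /=; rewrite ff'.
- by move=> *; apply: den_compA.
- by move=> m n f [wf _ tf]; apply: den_comp_id_l.
- by move=> m n f [wf sf _]; apply: den_comp_id_r.
- by move=> *; apply: den_tensA.
- by move=> *; apply: den_tens_unit_l.
- by move=> f wf; apply: den_tens_unit_r.
- exact: den_tens_id.
- move=> m n p m' n' p' f f' g g' [_ sf _] [_ _ tg] _ _.
  by apply: den_interchange; rewrite sf tg.
- by move=> * s t /=; rewrite addrA.
- by move=> * s t; apply: addrC.
- by move=> * s t; apply: add0r.
- by move=> * s t /=; rewrite mulN1r subrr.
- by move=> * s t; apply: mul1r.
- by move=> * s t; apply: mulrA.
- by move=> * s t; apply: mulrDl.
- by move=> * s t; apply: mulrDr.
- move=> m n p f g h [_ sf _] [_ sg _] _ s t /=.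
  by rewrite sg -sf -big_split; apply: eq_bigr => u _; apply: mulrDl.
- by move=> * s t /=; rewrite -big_split; apply: eq_bigr => u _; apply: mulrDr.
- by move=> * s t /=; rewrite mulr_sumr; apply: eq_bigr => u _; rewrite mulrA.
- by move=> * s t /=; rewrite mulr_sumr; apply: eq_bigr => u _; rewrite mulrCA.
- by move=> m n f g h [_ sf tf] [_ sg tg] _ s t /=; rewrite sg tg -sf -tf; apply: mulrDl.
- by move=> * s t; apply: mulrDr.
- by move=> * s t; apply: esym (mulrA _ _ _).
- by move=> * s t; apply: mulrCA.
- exact: den_zigzag1.
- exact: den_zigzag2.
- exact: den_loop.
Qed.

Lemma not_has_left_dual1 : ~ has_left_dual k 1.
Proof.
case=> d [ev [coev [_ [_ src_coev tgt_coev] snake _]]].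
suff : den (tcomp (ttens (tid 1) ev) (ttens coev (tid 1))) [:: e2] [:: e2] = 0.
  by rewrite (eqv_den snake) /= => /eqP; rewrite oner_eq0.
rewrite /= big1_seq // => u _; rewrite src_coev tgt_coev take0 drop0.
have [e2_u|] := eqVneq [:: e2] (drop (1 + d) u); last by rewrite andbF !mulr0.
rewrite [den ev _ _]den_eq0_count ?mulr0 ?mul0r //=.
have : e2 \in drop d (drop 1 u) by rewrite drop_drop addnC -e2_u mem_seq1.
by move/mem_drop; apply: contraTneq => /count_memPn.
Qed.

End Model.

Theorem mainTheorem12 (k : fieldType) : ~ TL0_rigid k.
Proof. by move=> rigid; exact: not_has_left_dual1 (rigid 1%N).1. Qed.
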